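(* Let $w$ be a word and $TG(w) = (V, E_1, \dots, E_T)$ the temporal graph it represents, with start points $S_1 < \dots < S_T$, and suppose $TG(w)$ is connected in every timestep. Then for every vertex $v_x \in V$: $x \in \mathrm{letters}(w[S_t, S_{t+d(v_x)+1} - 1])$ for all $t \in [1, T - d(v_x) - 2]$, and $x \in \mathrm{letters}(w[S_{T - d(v_x) - 1}, |w|])$.
   Context: Words are over $\Sigma=\{1,\dots,n\}$; $w[i]$ is the $i$-th letter, $w[i,j]$ the factor $w[i]\cdots w[j]$, $\mathrm{letters}(u)$ the set of symbols occurring in $u$, $\pi_{\mathcal S}(w)$ the subsequence of $w$ of all occurrences of symbols in $\mathcal S$. Symbols $x,y$ alternate in $w$ if $\pi_{\{x,y\}}(w) \in \{(xy)^k, (xy)^kx, (yx)^k, (yx)^ky : k \ge 0\}$. $G(w)$ has vertex set $V=\{v_1,\dots,v_n\}$ and undirected edge $(v_x,v_y)$ iff $x\neq y$ alternate in $w$; $d(v)$ is the degree of $v$ in $G(w)$. Start points: $S_1=1$, and $S_i$ is the least index $j>S_{i-1}$ with $w[j] \in \mathrm{letters}(w[S_{i-1},j-1])$; $S_1<\dots<S_T$ are all start points. The $t$-th timestep factor is $w[S_t,S_{t+1}-1]$ ($t<T$) or $w[S_T,|w|]$ ($t=T$). $TG(w)=(V,E_1,\dots,E_T)$ with $E_t$ the set of edges $(v_x,v_y)$ of $G(w)$ with $x$ or $y$ occurring in the $t$-th timestep factor. Connected in every timestep means $(V,E_t)$ is connected for all $t$. *)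

From mathcomp Require Import all_boot.
From mathcomp Require Import boolp.
Set Implicit Arguments. Unset Strict Implicit. Unset Printing Implicit Defensive.

(* Words over Sigma = {1,...,n} are sequences of naturals; positions are 1-indexed. *)

Definition letter (w : seq nat) (j : nat) : nat := nth 0 w j.-1.
(* w[i, j] = w[i] ... w[j] (1-indexed, empty if j < i) *)
Definition factor (w : seq nat) (i j : nat) : seq nat := drop i.-1 (take j w).
Definition letters (u : seq nat) : seq nat := undup u.

Definition proj2 (x y : nat) (w : seq nat) : seq nat :=
  filter (fun c => (c == x) || (c == y)) w.
Definition altpat (x y k : nat) : seq nat := flatten (nseq k [:: x; y]).

Definition alternate (w : seq nat) (x y : nat) : Prop :=
  exists k : nat, let s := proj2 x y w in
    s = altpat x y k \/ s = rcons (altpat x y k) x \/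
    s = altpat y x k \/ s = rcons (altpat y x k) y.

(* edge (v_x, v_y) of G(w), vertices v_1..v_n identified with 1..n *)
Definition Gedge (n : nat) (w : seq nat) (x y : nat) : bool :=
  [&& 1 <= x <= n, 1 <= y <= n, x != y & `[< alternate w x y >] ].

Definition degree (n : nat) (w : seq nat) (x : nat) : nat :=
  count (fun y => Gedge n w x y) (iota 1 n).

Definition next_start (w : seq nat) (s : nat) : option nat :=
  ohead [seq j <- iota s.+1 (size w - s) | letter w j \in letters (factor w s j.-1)].

Fixpoint starts_aux (w : seq nat) (fuel s : nat) : seq nat :=
  match fuel with
  | 0 => [:: s]
  | f.+1 => s :: (match next_start w s with
                  | Some j => starts_aux w f j
                  | None => [::]
                  end)
  end.

(* [:: S_1; ...; S_T] ; fuel |w| suffices since start points strictly increase in [1,|w|] *)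
Definition starts (w : seq nat) : seq nat := starts_aux w (size w) 1.

Definition T (w : seq nat) : nat := size (starts w).
Definition S (w : seq nat) (t : nat) : nat := nth 0 (starts w) t.-1.

Definition timestep (w : seq nat) (t : nat) : seq nat :=
  if t < T w then factor w (S w t) (S w t.+1 - 1) else factor w (S w (T w)) (size w).

Definition Eedge (n : nat) (w : seq nat) (t : nat) (x y : nat) : bool :=
  Gedge n w x y && ((x \in letters (timestep w t)) || (y \in letters (timestep w t))).

Definition connected_at (n : nat) (w : seq nat) (t : nat) : Prop :=
  forall u v, 1 <= u <= n -> 1 <= v <= n ->
    exists p : seq nat, path (Eedge n w t) u p /\ last u p = v.

Definition connected_every_timestep (n : nat) (w : seq nat) : Prop :=
  forall t, 1 <= t <= T w -> connected_at n w t.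

From mathcomp Require Import all_boot.
From mathcomp Require Import boolp zify.

(* Let d be the degree of v_x and suppose x is missing from d + 1 consecutive
   timesteps. An edge (v_x, v_y) lies in E_t only if x or y occurs in the t-th
   factor, so connectivity of (V, E_t) forces a neighbour of v_x into each of
   these timesteps: neighbours occur at least d + 1 times in the block. But a
   neighbour y alternates with x, so it occurs at most once in a factor free of
   x, and there are only d neighbours. (If n = 1, every letter is x.) *)

Set Implicit Arguments.
Unset Strict Implicit.

Lemma next_start_range w s j : next_start w s = Some j -> s < j <= size w.
Proof.
rewrite /next_start; case E: [seq _ <- _ | _] => [|h t] //= [<-].
have : h \in [seq j <- iota s.+1 (size w - s) | letter w j \in letters (factor w s j.-1)].
  by rewrite E mem_head.
by rewrite mem_filter mem_iota => /andP[_]; lia.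
Qed.

Lemma starts_aux_sorted_in w f s s0 : 1 <= s <= size w -> s0 < s ->
  path ltn s0 (starts_aux w f s) && all (fun j => 1 <= j <= size w) (starts_aux w f s).
Proof.
elim: f s s0 => [|f IH] s s0 hs hs0 /=; first by rewrite hs hs0.
case E: (next_start w s) => [j|] /=; last by rewrite hs0 hs.
have hj := next_start_range E.
by have /andP[-> ->] := IH j s ltac:(lia) ltac:(lia); rewrite hs0 hs.
Qed.

Definition timestep_end w t := if t < T w then S w t.+1 - 1 else size w.

Lemma timestepE w t : t <= T w -> timestep w t = factor w (S w t) (timestep_end w t).
Proof.
rewrite /timestep /timestep_end; case: ifP => // ht htT.
by have -> : t = T w by lia.
Qed.

Section StartPoints.
Variable w : seq nat.
Hypothesis w_neq0 : w != [::].

Lemma S_range t : 1 <= t <= T w -> 1 <= S w t <= size w.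
Proof.
have hw : 1 <= 1 <= size w by case: w w_neq0.
have /andP[_ /allP Hin] := starts_aux_sorted_in (size w) hw (ltn0Sn 0).
by case: t => // t /andP[_ ht]; apply/Hin/mem_nth.
Qed.

Lemma S_lt i j : 0 < i < j -> j <= T w -> S w i < S w j.
Proof.
have hw : 1 <= 1 <= size w by case: w w_neq0.
have /andP[Hsorted _] := starts_aux_sorted_in (size w) hw (ltn0Sn 0).
case: i j => [|i] [|j] //= hij hj.
rewrite /T /starts in hj.
by apply: (sorted_ltn_nth ltn_trans 0 (path_sorted Hsorted)) => //; rewrite inE; lia.
Qed.

Lemma S_le i j : 0 < i <= j -> j <= T w -> S w i <= S w j.
Proof.
case/andP=> hi; rewrite leq_eqVlt => /orP[/eqP-> //|hij] hj.
by apply/ltnW/S_lt; rewrite ?hi.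
Qed.

Lemma timestep_end_range t : 1 <= t <= T w -> S w t <= timestep_end w t <= size w.
Proof.
move=> ht; rewrite /timestep_end; case: ifP => htT; last by have := S_range ht; lia.
have := S_range (t := t.+1); have := @S_lt t t.+1; lia.
Qed.
End StartPoints.

Lemma factor_cat w i j k : i.-1 <= j <= k -> k <= size w ->
  factor w i k = factor w i j ++ factor w j.+1 k.
Proof.
case/andP=> hij hjk hk; rewrite /factor /= -{1}(cat_take_drop j (take k w)).
rewrite (take_takel _ hjk) drop_cat size_take_min; case: ifP => // hsz.
have -> : i.-1 = minn j (size w) by lia.
by rewrite subnn drop0 -size_take_min drop_size.
Qed.

Lemma size_factor w i j : j <= size w -> size (factor w i j) = j - i.-1.
Proof. by move=> hj; rewrite size_drop size_take_min; lia. Qed.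

Lemma infix_factor w i j : infix (factor w i j) w.
Proof. exact: infix_trans (infix_drop _ _) (infix_take _ _). Qed.

Lemma factor_subset w i i' k : i <= i' -> {subset factor w i' k <= factor w i k}.
Proof.
move=> hii' z; have hle : i.-1 <= i'.-1 by lia.
by rewrite /factor -(subnK hle) -drop_drop => /mem_drop.
Qed.

Lemma altpat_rcons x y k : rcons (altpat x y k) x = x :: altpat y x k.
Proof. by elim: k => //= k IH; rewrite -/(altpat x y k) -/(altpat y x k) IH. Qed.

Lemma path_neq_altpat x y k a : x != y -> a != x -> path [rel u v | u != v] a (altpat x y k).
Proof.
elim: k a => [|k IH] a hxy hax //=.
by rewrite -/(altpat x y k) /= hax hxy IH // eq_sym.
Qed.

Lemma alternate_sorted_neq w x y : x != y -> alternate w x y ->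
  sorted [rel u v | u != v] (proj2 x y w).
Proof.
move=> hxy [k /= [->|[->|[->|->]]]]; rewrite ?altpat_rcons /=.
- by apply: (@path_sorted _ _ y); apply: path_neq_altpat; rewrite // eq_sym.
- by apply: path_neq_altpat; rewrite // eq_sym.
- by apply: (@path_sorted _ _ x); apply: path_neq_altpat; rewrite // eq_sym.
- by apply: path_neq_altpat; rewrite // eq_sym.
Qed.

Lemma alternate_count_le1 w x y F : x != y -> alternate w x y -> infix F w ->
  x \notin F -> count_mem y F <= 1.
Proof.
move=> hxy /(alternate_sorted_neq hxy) Hsorted /infixP[A [C ew]] hxF.
move: Hsorted; rewrite ew /proj2 !filter_cat => /(infix_sorted (infix_infix _ _ _)).
have -> : [seq c <- F | (c == x) || (c == y)] = [seq c <- F | c == y].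
  by apply: eq_in_filter => c hc; case: eqP => // ex; rewrite -ex hc in hxF.
have -> : [seq c <- F | c == y] = nseq (count_mem y F) y.
  rewrite -size_filter; apply/all_pred1P.
  by rewrite all_filter; apply/allP => c _ /=; rewrite implybb.
by case: (count_mem y F) => [|[|k]] //=; rewrite eqxx.
Qed.

Lemma count_mem_seq_le_size (T : eqType) (N F : seq T) :
  {in N, forall y, count_mem y F <= 1} -> count (mem N) F <= size N.
Proof.
elim: N => [|y N IH] hN /=; first by rewrite (eq_count (a2 := pred0)) ?count_pred0.
rewrite (eq_count (a2 := predU (pred1 y) (mem N))) => [|z]; last by rewrite /= inE.
have := count_predUI (pred1 y) (mem N) F.
have := hN y (mem_head _ _); have := IH (fun z hz => hN z (mem_behead (s := y :: N) hz)); lia.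
Qed.

Definition neighbours n w x := filter (Gedge n w x) (iota 1 n).

Lemma size_neighbours n w x : size (neighbours n w x) = degree n w x.
Proof. exact: size_filter. Qed.

Lemma neighbour_in_timestep n w x t : 1 < n -> 1 <= x <= n -> connected_at n w t ->
  x \notin timestep w t -> has (mem (neighbours n w x)) (timestep w t).
Proof.
move=> hn hx Hconn hxt; pose v := if x == 1 then 2 else 1.
have hv : 1 <= v <= n by rewrite /v; case: ifP; lia.
have hvx : v != x by rewrite /v; case: ifP => /eqP; lia.
have [[|y p] [/= Hpath Hlast]] := Hconn x v hx hv; first by rewrite Hlast eqxx in hvx.
case/andP: Hpath => /andP[Hxy]; rewrite /letters !mem_undup (negbTE hxt) /= => hyt _.
apply/hasP; exists y => //=; rewrite mem_filter Hxy mem_iota.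
by case/and4P: Hxy => _ /andP[hy1 hyn] _ _; lia.
Qed.

Definition window w a b := factor w (S w a) (timestep_end w b).

Lemma infix_window w a b : infix (window w a b) w.
Proof. exact: infix_factor. Qed.

Section Windows.
Variable w : seq nat.
Hypothesis w_neq0 : w != [::].

Lemma window_cat a b : 0 < a <= b -> b < T w ->
  window w a b.+1 = window w a b ++ timestep w b.+1.
Proof.
move=> hab hb.
have hS : S w b.+1 = (timestep_end w b).+1.
  by have := S_range w_neq0 (t := b.+1) ltac:(lia); rewrite /timestep_end hb; lia.
have := S_le w_neq0 (i := a) (j := b.+1) ltac:(lia) hb.
have := timestep_end_range w_neq0 (t := b.+1) ltac:(lia).
by rewrite timestepE // /window hS => ? ?; apply: factor_cat; lia.
Qed.

Lemma window_neq0 a b : 0 < a <= b -> b <= T w -> window w a b != [::].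
Proof.
move=> hab hb; have hSab := S_le w_neq0 hab hb.
have := timestep_end_range w_neq0 (t := b) ltac:(lia).
have := S_range w_neq0 (t := a) ltac:(lia).
by rewrite -size_eq0 /window => ? hend; rewrite size_factor; lia.
Qed.
End Windows.

Section Vertex.
Variables (n : nat) (w : seq nat) (x : nat).
Hypothesis w_letters : all (fun c => 1 <= c <= n) w.
Hypothesis w_connected : connected_every_timestep n w.
Hypothesis x_vertex : 1 <= x <= n.
Hypothesis w_neq0 : w != [::].

Lemma window_count_neighbours a m : 1 < n -> 0 < a -> a + m <= T w ->
  x \notin window w a (a + m) -> m < count (mem (neighbours n w x)) (window w a (a + m)).
Proof.
move=> hn ha; elim: m => [|m IH] hT.
  rewrite addn0 /window -timestepE; last by lia.
  by move=> hxa; rewrite -has_count; apply: neighbour_in_timestep => //; apply: w_connected; lia.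
rewrite addnS window_cat //; try lia.
rewrite mem_cat count_cat negb_or => /andP[hxW hxt].
have := IH ltac:(lia) hxW.
have := neighbour_in_timestep hn x_vertex (w_connected (t := (a + m).+1) ltac:(lia)) hxt.
by rewrite has_count; lia.
Qed.

Lemma mem_window_degree a : 0 < a -> a + degree n w x <= T w ->
  x \in window w a (a + degree n w x).
Proof.
move=> ha hT; case: (leqP n 1) => hn.
  have := window_neq0 w_neq0 (a := a) (b := a + degree n w x) ltac:(lia) hT.
  case E: window => [|z F] // _.
  have /(allP w_letters) /= hz : z \in w.
    by apply: (mem_infix (infix_window w a (a + degree n w x))); rewrite E mem_head.
  by rewrite (_ : x = z) ?mem_head; lia.
apply/negPn/negP => hxW; have := window_count_neighbours hn ha hT hxW.
suff : count (mem (neighbours n w x)) (window w a (a + degree n w x)) <= degree n w x by lia.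
rewrite -[X in _ <= X]size_neighbours; apply: count_mem_seq_le_size => y.
rewrite mem_filter => /andP[/and4P[_ _ hxy /asboolP Halt] _].
exact: alternate_count_le1 hxy Halt (infix_window _ _ _) hxW.
Qed.
End Vertex.

Unset Implicit Arguments.

Theorem lemma1 (n : nat) (w : seq nat)
  (Hw : all (fun c => 1 <= c <= n) w)
  (Hconn : connected_every_timestep n w)
  (x : nat) (Hx : 1 <= x <= n) :
  (forall t, 1 <= t -> t + degree n w x + 2 <= T w ->
     x \in letters (factor w (S w t) (S w (t + degree n w x + 1) - 1)))
  /\
  (degree n w x + 2 <= T w ->
     x \in letters (factor w (S w (T w - degree n w x - 1)) (size w))).
Proof.
set d := degree n w x; have w_neq0 : 2 <= T w -> w != [::] by apply: contraTneq => ->.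
split => [t ht hT | hT]; rewrite /letters mem_undup.
  have := mem_window_degree Hw Hconn Hx (w_neq0 ltac:(lia)) ht ltac:(lia).
  by rewrite /window /timestep_end ifT ?addn1 //; lia.
have := mem_window_degree Hw Hconn Hx (w_neq0 ltac:(lia)) (a := T w - d) ltac:(lia) ltac:(lia).
rewrite /window /timestep_end subnK ?ltnn; last by lia.
by apply: factor_subset; apply: S_le; first apply: w_neq0; lia.
Qed.
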